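(* Let $p,q$ be odd primes, $m\in\mathbb{N}$ and $k\in\{0,1,\dots,m\}$. Suppose there exist $u,v\in\mathbb{Z}$ with $\gcd(u,v)=1$ such that either $$u+\delta_4 v=q^k \text{ and } H_p(u,v)=q^{m-k},$$ or $$u+\delta_4 v=-q^k \text{ and } H_p(u,v)=-q^{m-k}.$$ Then $k=0$, or ($k=m$ and $p\ne q$), or ($k=m-1$ and $p=q$).
   Context: For an odd prime $p$ put $\delta_4=1$ if $p\equiv 1\pmod 4$, $\delta_4=-1$ if $p\equiv 3\pmod 4$. Let $G_p(u,v)=\mathrm{Im}\big((1+i)(u+iv)^p\big)\in\mathbb{Z}[u,v]$ (for real $u,v$); $u+\delta_4 v$ divides $G_p$ in $\mathbb{Z}[u,v]$, and $H_p(u,v):=G_p(u,v)/(u+\delta_4 v)\in\mathbb{Z}[u,v]$. $\mathbb{N}$ denotes the positive integers. *)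

From mathcomp Require Import all_boot all_order all_algebra.
Set Implicit Arguments. Unset Strict Implicit. Unset Printing Implicit Defensive.
Import Order.TTheory GRing.Theory Num.Theory.
Local Open Scope ring_scope.

(* Gaussian integers x + i y represented as pairs (x, y) of integers. *)
Definition gmul (z w : int * int) : int * int :=
  (z.1 * w.1 - z.2 * w.2, z.1 * w.2 + z.2 * w.1).

Definition gpow (z : int * int) (n : nat) : int * int :=
  iter n (gmul z) (1, 0).

Definition delta4 (p : nat) : int := if (p %% 4 == 1)%N then 1 else -1.

(* G_p(u,v) = Im((1+i)(u+iv)^p); for (u+iv)^p = x + i y this is x + y. *)
Definition Gp (p : nat) (u v : int) : int :=
  let w := gmul (1, 1) (gpow (u, v) p) in w.2.

(* H_p(u,v) = G_p(u,v) / (u + delta_4 v); the polynomial quotient is exact,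
   so its value at integers with u + delta_4 v <> 0 is the exact integer
   quotient below. *)
Definition Hp (p : nat) (u v : int) : int :=
  (Gp p u v %/ (u + delta4 p * v))%Z.

From HB Require Import structures.
From mathcomp Require Import all_boot all_order all_algebra.
From mathcomp Require Import ring zify.
Set Implicit Arguments. Unset Strict Implicit. Unset Printing Implicit Defensive.
Import Order.TTheory GRing.Theory Num.Theory.
Local Open Scope ring_scope.

(* With d = delta4 p and t = u + d v we have u + i v = (i - d) v + t, so the
   binomial theorem expands G_p(u, v) as sum_j C(p, j) c_(p - j) v^(p - j) t^j
   with c_j = Im((1 + i)(i - d)^j) ([gcoef d j]).  Since (i - d)^4 = -4,
   c_p = 0 and c_(p-1) = +-2^s; hence t divides G_p and
   H_p = p c_(p-1) v^(p-1) + t R ([Hrest]), where p divides R as soon as p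
   divides t (the inner binomials vanish mod p).
   If k > 0 then q divides t but not v, so q does not divide p c_(p-1) v^(p-1),
   and comparing q-adic valuations of both sides forces either m = k and
   p <> q, or p = q and m = k + 1. *)

Definition gauss := (int * int)%type.

HB.instance Definition _ := GRing.Zmodule.on gauss.

(* Pairs also carry the componentwise ring structure; writing Gaussian integers
   as [gauss_of x y] makes [*] and [^+] resolve to the Gaussian ones. *)
Definition gauss_of (x y : int) : gauss := (x, y).

Lemma gmulA : associative (gmul : gauss -> gauss -> gauss).
Proof. by move=> [a b] [c d] [e f]; rewrite /gmul /=; congr pair; ring. Qed.

Lemma gmulC : commutative (gmul : gauss -> gauss -> gauss).
Proof. by move=> [a b] [c d]; rewrite /gmul /=; congr pair; ring. Qed.

Lemma gmul1 : left_id (gauss_of 1 0) gmul.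
Proof. by move=> [a b]; rewrite /gmul /=; congr pair; ring. Qed.

Lemma gmulDl : left_distributive (gmul : gauss -> gauss -> gauss) +%R.
Proof. by move=> [a b] [c d] [e f]; rewrite /gmul; congr pair => /=; ring. Qed.

Lemma gauss_one_neq0 : gauss_of 1 0 != 0.
Proof. by []. Qed.

HB.instance Definition _ :=
  GRing.Zmodule_isComNzRing.Build gauss gmulA gmulC gmul1 gmulDl gauss_one_neq0.

Lemma gaussmulE (z w : gauss) : z * w = gmul z w.
Proof. by []. Qed.

Lemma gpowE (z : gauss) n : gpow z n = z ^+ n.
Proof. by elim: n => [|n IHn] //=; rewrite IHn exprS. Qed.

Lemma snd_sum I (r : seq I) (P : pred I) (F : I -> gauss) :
  (\sum_(i <- r | P i) F i).2 = \sum_(i <- r | P i) (F i).2.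
Proof. exact: (big_morph snd (fun _ _ => erefl) erefl). Qed.

Lemma snd_mulrn (z : gauss) n : (z *+ n).2 = z.2 *+ n.
Proof. by elim: n => [|n IHn] //; rewrite !mulrS -IHn. Qed.

Lemma snd_mulr_real (z : gauss) (x : int) : (z * gauss_of x 0).2 = z.2 * x.
Proof. by rewrite gaussmulE /gmul /=; ring. Qed.

Lemma gauss_of_realX (x : int) n : gauss_of x 0 ^+ n = gauss_of (x ^+ n) 0.
Proof.
elim: n => [|n IHn] //; rewrite exprS IHn.
by rewrite gaussmulE /gmul /= exprS; congr pair; ring.
Qed.

Definition gcoef (d : int) (j : nat) : int := (gauss_of 1 1 * gauss_of (- d) 1 ^+ j).2.

Lemma gcoefD4 (d : int) r j :
  d * d = 1 -> gcoef d (4 * r + j) = gcoef d j * (-4) ^+ r.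
Proof.
move=> dd; have i_sub_d4 : gauss_of (- d) 1 ^+ 4 = gauss_of (-4) 0.
  have i_sub_d2 : gauss_of (- d) 1 ^+ 2 = gauss_of 0 (-2 * d).
    by rewrite expr2 gaussmulE /gmul /= mulrNN dd; congr pair; ring.
  rewrite -[4%N]/(2 * 2)%N exprM i_sub_d2 expr2 gaussmulE /gmul /=.
  by rewrite mulrACA dd; congr pair; ring.
rewrite /gcoef exprD exprM i_sub_d4 gauss_of_realX.
by rewrite mulrCA mulrC snd_mulr_real.
Qed.

Lemma odd_mod4 p : odd p -> exists r, p = (4 * r + 1)%N \/ p = (4 * r + 3)%N.
Proof. by move=> op; exists (p %/ 4)%N; lia. Qed.

Lemma gcoef_delta4 p : odd p ->
  gcoef (delta4 p) p = 0 /\ exists s, `|gcoef (delta4 p) p.-1|%N = (2 ^ s)%N.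
Proof.
move=> /odd_mod4[r [-> | ->]].
  have -> : delta4 (4 * r + 1)%N = 1 by rewrite /delta4 mulnC modnMDl.
  split; first by rewrite gcoefD4 //; apply: mul0r.
  exists (2 * r)%N; rewrite addn1 /= -[(4 * r)%N]addn0 gcoefD4 //.
  by rewrite -[gcoef 1 0]/(1 : int) mul1r abszX expnM.
have -> : delta4 (4 * r + 3)%N = -1 by rewrite /delta4 mulnC modnMDl.
split; first by rewrite gcoefD4 //; apply: mul0r.
exists (2 * r).+1; rewrite addnS /= gcoefD4 // -[gcoef _ 2]/(2 : int).
by rewrite abszM abszX expnS expnM.
Qed.

Lemma Gp_binomial (d : int) n u v :
  Gp n u v = \sum_(j < n.+1)
    (gcoef d (n - j) * v ^+ (n - j) * (u + d * v) ^+ j) *+ 'C(n, j).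
Proof.
rewrite /Gp gpowE -gaussmulE.
have -> : (u, v) = gauss_of (- d) 1 * gauss_of v 0 + gauss_of (u + d * v) 0.
  by rewrite gaussmulE /gmul /=; congr pair => /=; ring.
rewrite exprDn mulr_sumr snd_sum.
apply: eq_bigr => j _; rewrite mulrnAr snd_mulrn exprMn !gauss_of_realX.
by rewrite !mulrA !snd_mulr_real.
Qed.

Definition Hrest (d : int) n (v t : int) : int :=
  \sum_(j < n) (gcoef d (n - j.+1) * v ^+ (n - j.+1) * t ^+ j) *+ 'C(n.+1, j.+2).

Lemma Gp_factor (d : int) n u v : gcoef d n.+1 = 0 ->
  Gp n.+1 u v = (u + d * v) * (n.+1%:Z * (gcoef d n * v ^+ n)
                               + (u + d * v) * Hrest d n v (u + d * v)).
Proof.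
move=> c0; rewrite (Gp_binomial d); set t := u + d * v.
rewrite !big_ord_recl !lift0 subn0 c0.
rewrite !mul0r mul0rn add0r [RHS]mulrDr; congr (_ + _).
  by rewrite subSS subn0 bin1 expr1 -mulr_natl; ring.
rewrite /Hrest !mulr_sumr; apply: eq_bigr => j _.
by rewrite !lift0 !exprS subSS !mulrnAr; congr (_ *+ _); ring.
Qed.

Lemma prime_dvd_Hrest (d : int) p v t : prime p -> odd p ->
  (p%:Z %| t)%Z -> (p%:Z %| Hrest d p.-1 v t)%Z.
Proof.
case: p => [//|n] pn on pt; have n_gt1 : (1 < n)%N by case: n {pt} pn on => [|[|]].
apply: rpred_sum => j _.
have [j_small | j_last] := ltnP j.+1 n.
  rewrite -mulr_natr dvdz_mull // dvdzE natz /=.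
  by apply: prime_dvd_bin; rewrite //= ltnS.
apply/rpredMn/dvdz_mull/dvdz_exp => //.
by have := ltn_ord j; lia.
Qed.

Lemma Hp_decomp p u v : prime p -> odd p -> u + delta4 p * v != 0 ->
  Hp p u v = p%:Z * (gcoef (delta4 p) p.-1 * v ^+ p.-1)
             + (u + delta4 p * v) * Hrest (delta4 p) p.-1 v (u + delta4 p * v).
Proof.
move=> pp op t_neq0; have [cp _] := gcoef_delta4 op.
by case: p pp op cp t_neq0 => [//|n] _ _ cp t_neq0; rewrite /Hp (Gp_factor u v cp) mulKz.
Qed.

Lemma odd_prime_ndvd_pow2 (q : nat) (c : int) s :
  prime q -> odd q -> `|c|%N = (2 ^ s)%N -> ~~ (q%:Z %| c)%Z.
Proof.
move=> pq oq c2; rewrite dvdzE c2 /= Euclid_dvdX // negb_and; apply/orP; left.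
by rewrite dvdn_prime2 //; apply: contraTN oq => /eqP ->.
Qed.

Lemma prime_ndvd_coprime_lin (q : nat) (u v d : int) : prime q ->
  gcdz u v = 1%N -> (q%:Z %| u + d * v)%Z -> ~~ (q%:Z %| v)%Z.
Proof.
move=> pq uv qt; apply/negP => qv.
have qu : (q%:Z %| u)%Z by rewrite -(addrK (d * v) u) rpredB // dvdz_mull.
have := dvdz_gcd q%:Z u v; rewrite qu qv uv dvdzE /= dvdn1 => /eqP q1.
by rewrite q1 in pq.
Qed.

Lemma prime_dvdz_mul (q : nat) (x y : int) : prime q ->
  (q%:Z %| x * y)%Z = (q%:Z %| x)%Z || (q%:Z %| y)%Z.
Proof. by move=> pq; rewrite !dvdzE abszM Euclid_dvdM. Qed.

Lemma dvdz_pfactor_absz (q i j : nat) (S : int) : (1 < q)%N ->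
  `|S|%N = (q ^ j)%N -> ((q ^ i)%:Z %| S)%Z = (i <= j)%N.
Proof. by move=> q_gt1 Sq; rewrite dvdzE Sq /= dvdn_Pexp2l. Qed.

Lemma valuation_cases (p q j : nat) (X t R S : int) :
  prime p -> prime q -> `|S|%N = (q ^ j)%N -> S = p%:Z * X + t * R ->
  ((p%:Z %| t)%Z -> (p%:Z %| R)%Z) -> (q%:Z %| t)%Z -> ~~ (q%:Z %| X)%Z ->
  (j = 0%N /\ p <> q) \/ (j = 1%N /\ p = q).
Proof.
move=> pp pq Sq eS pR qt qX; have q_gt1 := prime_gt1 pq.
have qS i : ((q ^ i)%:Z %| S)%Z = (i <= j)%N by apply: dvdz_pfactor_absz.
have [eq_pq | /eqP p_neq_q] := eqVneq p q; [subst p; right | left]; split=> //.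
  have qS1 : (q%:Z %| S)%Z by rewrite eS rpredD ?dvdz_mulr.
  have j_gt0 : (0 < j)%N by rewrite -(qS 1%N) expn1.
  apply/eqP; rewrite eqn_leq j_gt0 andbT leqNgt -(qS 2); apply: contra qX => q2S.
  have q2tR : ((q ^ 2)%:Z %| t * R)%Z by rewrite PoszM dvdz_mul ?pR.
  have : ((q ^ 2)%:Z %| q%:Z * X)%Z by rewrite -(addrK (t * R) (q%:Z * X)) -eS rpredB.
  by rewrite PoszM dvdz_mul2l // eqz_nat -lt0n prime_gt0.
apply/eqP; rewrite -leqn0 leqNgt -(qS 1%N) expn1 eS; apply: contraNN qX => qS1.
have : (q%:Z %| p%:Z * X)%Z by rewrite -(addrK (t * R) (p%:Z * X)) rpredB ?dvdz_mulr.
rewrite prime_dvdz_mul // => /orP[|//]; rewrite dvdzE /= dvdn_prime2 // => /eqP eq_qp.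
by rewrite eq_qp in p_neq_q.
Qed.

Theorem lemma6 (p q m k : nat) (u v : int) :
  prime p -> odd p -> prime q -> odd q -> (0 < m)%N -> (k <= m)%N ->
  gcdz u v = 1%N ->
  ((u + delta4 p * v = (q ^ k)%:Z /\ Hp p u v = (q ^ (m - k))%:Z) \/
   (u + delta4 p * v = - (q ^ k)%:Z /\ Hp p u v = - (q ^ (m - k))%:Z)) ->
  k = 0%N \/ (k = m /\ p <> q) \/ (k.+1 = m /\ p = q).
Proof.
move=> pp op pq oq _ km uv eqs.
have [tq Hq] : absz (u + delta4 p * v) = (q ^ k)%N /\ absz (Hp p u v) = (q ^ (m - k))%N.
  by case: eqs => -[-> ->]; rewrite ?abszN.
case: k km tq Hq {eqs} => [|k] km tq Hq; [by left | right].
have qt : (q%:Z %| u + delta4 p * v)%Z by rewrite dvdzE tq dvdn_exp.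
have t_neq0 : u + delta4 p * v != 0 by rewrite -absz_gt0 tq expn_gt0 prime_gt0.
have qX : ~~ (q%:Z %| gcoef (delta4 p) p.-1 * v ^+ p.-1)%Z.
  have [_ [s c2]] := gcoef_delta4 op.
  rewrite prime_dvdz_mul // negb_or (odd_prime_ndvd_pow2 pq oq c2) /=.
  rewrite dvdzE abszX Euclid_dvdX // negb_and -dvdzE.
  by rewrite (prime_ndvd_coprime_lin pq uv qt).
have pR := prime_dvd_Hrest (delta4 p) v pp op.
have [[mk p_neq_q] | [mk ->]] :=
  valuation_cases pp pq Hq (Hp_decomp pp op t_neq0) (pR _) qt qX.
  by left; split=> //; rewrite -(subnK km) mk.
by right; split=> //; rewrite -(subnK km) mk.
Qed.
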